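(* Let $0\le s<t\le T$ and let $\gamma_{(s,t)}$ be the three-part path in $\{\mathrm{Im}\,z\ge0\}$ $$\gamma_{(s,t)}=[s,s+i(t-s)]\cup[s+i(t-s),t+i(t-s)]\cup[t+i(t-s),t],$$ and $\overline{\gamma_{(s,t)}}$ its complex conjugate. Then for any $\varepsilon>0$ and $\alpha\in(0,1)$, $$\int_{\gamma_{(s,t)}}|dz|\int_{\overline{\gamma_{(s,t)}}}|dw|\,|-i(z-w)+\varepsilon|^{\alpha-2}\le c\,|t-s|^\alpha,$$ where $c$ does not depend on $s,t,\varepsilon$. Moreover, for any $\eta>0$ and $\lambda\in(0,\alpha)$, $$\int_{\gamma_{(s,t)}}|dz|\int_{\overline{\gamma_{(s,t)}}}|dw|\,\big|(-i(z-w)+\varepsilon)^{\alpha-2}-(-i(z-w)+\eta)^{\alpha-2}\big|\le c\,|t-s|^{\alpha-\lambda}|\varepsilon-\eta|^\lambda,$$ where $c$ does not depend on $s,t,\varepsilon,\eta$.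
   Context: $|dz|$ denotes integration with respect to arc length along the path. Complex powers are taken with the principal branch (for $z\in\gamma_{(s,t)}$, $w\in\overline{\gamma_{(s,t)}}$ and $\varepsilon>0$, $-i(z-w)+\varepsilon$ has positive real part). *)

From Stdlib Require Import Reals.
From Coquelicot Require Import Coquelicot.
Open Scope R_scope.

(* Real power with the convention 0^a = 0 (used only for exponents a > 0). *)
Definition rpow (x a : R) : R :=
  if Rle_dec x 0 then 0 else Rpower x a.

(* Principal argument in (-PI, PI]. *)
Definition Arg (u : C) : R :=
  let x := fst u in let y := snd u in
  if Rlt_dec 0 x then atan (y / x)
  else if Rlt_dec x 0 then
    (if Rle_dec 0 y then atan (y / x) + PI else atan (y / x) - PI)
  else if Rlt_dec 0 y then PI / 2
  else if Rlt_dec y 0 then - (PI / 2) else 0.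

(* Principal complex power u^p = exp(p Log u), Log u = ln|u| + i Arg u; 0^p := 0. *)
Definition cpow (u : C) (p : R) : C :=
  if Req_EM_T (Cmod u) 0 then RtoC 0
  else (Rpower (Cmod u) p * cos (p * Arg u), Rpower (Cmod u) p * sin (p * Arg u)).

(* Arc-length (unit speed) parametrization of the three-part path
   gamma_(s,t) = [s, s+i(t-s)] ∪ [s+i(t-s), t+i(t-s)] ∪ [t+i(t-s), t],
   with parameter u ∈ [0, 3(t-s)]. *)
Definition gam (s t u : R) : C :=
  let L := t - s in
  if Rle_dec u L then (s, u)
  else if Rle_dec u (2 * L) then (s + (u - L), L)
  else (t, 3 * L - u).

Definition path_dint (s t : R) (F : C -> C -> R) : R :=
  RInt (fun u => RInt (fun v => F (gam s t u) (Cconj (gam s t v))) 0 (3 * (t - s)))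
       0 (3 * (t - s)).

Definition kern_base (z w : C) (eps : R) : C :=
  Cplus (Cmult (Copp Ci) (Cminus z w)) (RtoC eps).

(* For u in [0, 3(t-s)], Im (gam s t u) is at least 2/3 of the distance of u to
   the nearer endpoint, and Re (-i(z - conj w) + mu) = Im z + Im w + mu.  Both
   integrands are therefore dominated by K (mu + tent u + tent v)^q with
   -2 < q < -1, whose double integral over [0, 3(t-s)]^2 is at most
   K c (t-s)^(q+2) uniformly in mu > 0.  The first bound is the case q = alpha - 2.
   For the second, with p = alpha - 2 and a = Im z + Im w, the derivative of
   e |-> (a + e + ib)^p is O((a + e)^(p-1)), so the difference at eps and eta is
   both O(a'^(p-1) |eps - eta|) and O(a'^p), a' = a + min eps eta; interpolating
   gives O(|eps - eta|^lam a'^(p-lam)), the case q = p - lam. *)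

From Stdlib Require Import Reals Lra Classical.
From Coquelicot Require Import Coquelicot.
Open Scope R_scope.

(* Coquelicot's [RInt] of a non-integrable function is [0]; an upper bound
   that is a nonnegative integral is therefore valid without integrability. *)
Lemma RInt_not_ex (f : R -> R) a b : ~ ex_RInt f a b -> RInt f a b = 0.
Proof.
intros Hf. unfold RInt, iota, lim. simpl. unfold R_complete_lim.
rewrite (Lub_Rbar_eqset _ (fun _ => True)).
- rewrite (is_lub_Rbar_unique _ p_infty); [reflexivity|].
  split; [intros x _; simpl; auto|].
  intros [l| |] Hl; simpl; auto.
  + specialize (Hl (l + 1) I). simpl in Hl. lra.
  + specialize (Hl 0 I). simpl in Hl. auto.
- intros x; split; auto. intros _ y Hy. exfalso. apply Hf. exists y. exact Hy.
Qed.

Lemma RInt_le_is_RInt (f g : R -> R) a b I :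
  a <= b -> is_RInt g a b I -> 0 <= I ->
  (forall x, a <= x <= b -> f x <= g x) -> RInt f a b <= I.
Proof.
intros Hab Hg HI Hfg.
destruct (classic (ex_RInt f a b)) as [Hf|Hf].
- rewrite <- (is_RInt_unique _ _ _ _ Hg).
  apply RInt_le; [exact Hab|exact Hf|eexists; exact Hg|].
  intros x Hx; apply Hfg; lra.
- rewrite RInt_not_ex; assumption.
Qed.

Lemma Rpower_pos x y : 0 < Rpower x y.
Proof. apply exp_pos. Qed.

Lemma Rle_Rpower_l_neg a b c : c < 0 -> 0 < a <= b -> Rpower b c <= Rpower a c.
Proof.
intros Hc Hab.
assert (E : forall x, Rpower x c = / Rpower x (- c)).
{ intros x. rewrite <- Rpower_Ropp, Ropp_involutive. reflexivity. }
rewrite !E. apply Rinv_le_contravar; [apply Rpower_pos|].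
apply Rle_Rpower_l; lra.
Qed.

Lemma Rpower_subadditive a b r : 0 < a -> 0 < b -> 0 < r < 1 ->
  Rpower (a + b) r <= Rpower a r + Rpower b r.
Proof.
intros Ha Hb Hr.
assert (E : forall z, 0 < z -> Rpower z r = z * Rpower z (r - 1)).
{ intros z Hz. rewrite <- (Rpower_1 z) at 2 by exact Hz.
  rewrite <- Rpower_plus. f_equal; ring. }
rewrite (E (a + b)), (E a), (E b) by lra.
rewrite Rmult_plus_distr_r.
apply Rplus_le_compat; apply Rmult_le_compat_l; try lra;
  apply Rle_Rpower_l_neg; lra.
Qed.

Lemma Rpower_sub_div_nonneg y z r : 0 < y <= z -> r <> 0 ->
  0 <= (Rpower z r - Rpower y r) / r.
Proof.
intros Hyz Hr. destruct (Rlt_or_le r 0) as [Hneg|Hpos].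
- pose proof (Rle_Rpower_l_neg y z r Hneg Hyz).
  replace ((Rpower z r - Rpower y r) / r) with ((Rpower y r - Rpower z r) / - r)
    by (field; exact Hr).
  apply Rdiv_le_0_compat; lra.
- pose proof (Rle_Rpower_l y z r Hpos Hyz).
  apply Rdiv_le_0_compat; lra.
Qed.

Lemma rpow_Rpower x a : 0 < x -> rpow x a = Rpower x a.
Proof. intros Hx. unfold rpow. destruct Rle_dec; [lra|reflexivity]. Qed.

Lemma rpow_nonneg x a : 0 <= rpow x a.
Proof. unfold rpow. destruct Rle_dec; [lra|left; apply Rpower_pos]. Qed.

Lemma is_derive_Rpower_affine a s q x : 0 < a + s * x ->
  is_derive (fun x => Rpower (a + s * x) q) x (s * (q * Rpower (a + s * x) (q - 1))).
Proof.
intros Hx.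
apply (is_derive_comp (fun y => Rpower y q) (fun x => a + s * x)).
- apply is_derive_Reals, derivable_pt_lim_power, Hx.
- auto_derive; [exact I|ring].
Qed.

Lemma is_RInt_Rpower_affine a s q M : q <> -1 -> s <> 0 -> 0 <= M ->
  (forall x, 0 <= x <= M -> 0 < a + s * x) ->
  is_RInt (fun x => Rpower (a + s * x) q) 0 M
    ((Rpower (a + s * M) (q + 1) - Rpower a (q + 1)) / (s * (q + 1))).
Proof.
intros Hq Hs HM Hpos.
assert (Hq1 : q + 1 <> 0) by lra.
set (F := fun x => Rpower (a + s * x) (q + 1) / (s * (q + 1))).
replace ((Rpower (a + s * M) (q + 1) - Rpower a (q + 1)) / (s * (q + 1)))
  with (minus (F M) (F 0)).
2:{ unfold F, minus, plus, opp; simpl. rewrite Rmult_0_r, Rplus_0_r. field; auto. }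
apply (is_RInt_derive (V := R_CompleteNormedModule)); intros x Hx;
  rewrite Rmin_left, Rmax_right in Hx by lra.
- unfold F. apply (is_derive_ext (fun x => / (s * (q + 1)) * Rpower (a + s * x) (q + 1))).
  { intros y; simpl; apply Rmult_comm. }
  replace (Rpower (a + s * x) q)
    with (/ (s * (q + 1)) * (s * ((q + 1) * Rpower (a + s * x) (q + 1 - 1)))).
  + apply is_derive_scal, is_derive_Rpower_affine, Hpos; lra.
  + replace (q + 1 - 1) with q by ring. field; auto.
- apply (ex_derive_continuous (V := R_NormedModule)).
  eexists. apply is_derive_Rpower_affine, Hpos; lra.
Qed.

Definition tent (M v : R) : R := Rmin v (M - v).

Lemma tent_nonneg M v : 0 <= v <= M -> 0 <= tent M v.
Proof. intros Hv. apply Rmin_glb; lra. Qed.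

Lemma Rpower_tent_le Y M v q : q < 0 -> 0 < Y -> 0 <= v <= M ->
  Rpower (Y + tent M v) q <= Rpower (Y + v) q + Rpower (Y + M - v) q.
Proof.
intros Hq HY Hv.
pose proof (Rpower_pos (Y + v) q). pose proof (Rpower_pos (Y + M - v) q).
unfold tent, Rmin. destruct Rle_dec.
- lra.
- replace (Y + (M - v)) with (Y + M - v) by ring. lra.
Qed.

Lemma is_RInt_Rpower_tent Y M q : 0 < Y -> 0 <= M -> q <> -1 ->
  is_RInt (fun v => Rpower (Y + v) q + Rpower (Y + M - v) q) 0 M
    (2 * ((Rpower (Y + M) (q + 1) - Rpower Y (q + 1)) / (q + 1))).
Proof.
intros HY HM Hq.
assert (Hq1 : q + 1 <> 0) by lra.
pose proof (is_RInt_Rpower_affine Y 1 q M Hq ltac:(lra) HM ltac:(intros; lra)) as Iup.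
pose proof (is_RInt_Rpower_affine (Y + M) (-1) q M Hq ltac:(lra) HM ltac:(intros; lra))
  as Idown.
replace (2 * ((Rpower (Y + M) (q + 1) - Rpower Y (q + 1)) / (q + 1)))
  with (plus ((Rpower (Y + 1 * M) (q + 1) - Rpower Y (q + 1)) / (1 * (q + 1)))
             ((Rpower (Y + M + -1 * M) (q + 1) - Rpower (Y + M) (q + 1)) / (-1 * (q + 1)))).
2:{ unfold plus; simpl. replace (Y + 1 * M) with (Y + M) by ring.
    replace (Y + M + -1 * M) with Y by ring. field; exact Hq1. }
apply (is_RInt_ext (fun v => Rpower (Y + 1 * v) q + Rpower (Y + M + -1 * v) q)).
- intros v _. f_equal; f_equal; ring.
- exact (is_RInt_plus _ _ _ _ _ _ Iup Idown).
Qed.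

Lemma RInt_le_tent (F : R -> R) K q Y M : q < 0 -> q <> -1 -> 0 < Y -> 0 <= M -> 0 <= K ->
  (forall v, 0 <= v <= M -> F v <= K * Rpower (Y + tent M v) q) ->
  RInt F 0 M <= K * (2 * ((Rpower (Y + M) (q + 1) - Rpower Y (q + 1)) / (q + 1))).
Proof.
intros Hq Hq1 HY HM HK HF.
apply (RInt_le_is_RInt _ (fun v => K * (Rpower (Y + v) q + Rpower (Y + M - v) q))).
- exact HM.
- exact (is_RInt_scal _ _ _ K _ (is_RInt_Rpower_tent Y M q HY HM Hq1)).
- apply Rmult_le_pos; [exact HK|].
  apply Rmult_le_pos; [lra|]. apply Rpower_sub_div_nonneg; lra.
- intros v Hv. eapply Rle_trans; [apply HF, Hv|].
  apply Rmult_le_compat_l; [exact HK|]. apply Rpower_tent_le; assumption.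
Qed.

Lemma double_RInt_le_tent (G : R -> R -> R) K q mu M :
  -2 < q < -1 -> 0 < mu -> 0 < M -> 0 <= K ->
  (forall u v, 0 <= u <= M -> 0 <= v <= M ->
     G u v <= K * Rpower (mu + tent M u + tent M v) q) ->
  RInt (fun u => RInt (G u) 0 M) 0 M
    <= 4 * K / (- (q + 1) * (q + 2)) * Rpower M (q + 2).
Proof.
intros Hq Hmu HM HK HG.
set (K1 := 2 * K / - (q + 1)).
assert (HK1 : 0 <= K1) by (apply Rdiv_le_0_compat; lra).
assert (Hinner : forall u, 0 <= u <= M ->
          RInt (G u) 0 M <= K1 * Rpower (mu + tent M u) (q + 1)).
{ intros u Hu. pose proof (tent_nonneg M u Hu).
  eapply Rle_trans; [apply RInt_le_tent; auto; lra|].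
  pose proof (Rpower_pos (mu + tent M u + M) (q + 1)).
  replace (K * (2 * ((Rpower (mu + tent M u + M) (q + 1) - Rpower (mu + tent M u) (q + 1))
                     / (q + 1))))
    with (K1 * (Rpower (mu + tent M u) (q + 1) - Rpower (mu + tent M u + M) (q + 1)))
    by (unfold K1; field; lra).
  apply Rmult_le_compat_l; lra. }
eapply Rle_trans; [apply (RInt_le_tent _ K1 (q + 1) mu M); auto; lra|].
replace (q + 1 + 1) with (q + 2) by ring.
pose proof (Rpower_subadditive mu M (q + 2) Hmu HM ltac:(lra)).
replace (4 * K / (- (q + 1) * (q + 2)) * Rpower M (q + 2))
  with (K1 * (2 * (Rpower M (q + 2) / (q + 2)))) by (unfold K1; field; lra).
apply Rmult_le_compat_l; [exact HK1|].
apply Rmult_le_compat_l; [lra|].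
apply Rmult_le_compat_r; [left; apply Rinv_0_lt_compat; lra|lra].
Qed.

Lemma Im_gam_ge s t u : s < t -> 0 <= u <= 3 * (t - s) ->
  2 / 3 * tent (3 * (t - s)) u <= Im (gam s t u).
Proof.
intros Hst Hu. unfold tent.
pose proof (Rmin_l u (3 * (t - s) - u)). pose proof (Rmin_r u (3 * (t - s) - u)).
unfold gam. destruct (Rle_dec u (t - s)); [simpl; lra|].
destruct (Rle_dec u (2 * (t - s))); simpl; lra.
Qed.

Lemma path_dint_le q : -2 < q < -1 ->
  exists c, forall s t mu K (F : C -> C -> R), s < t -> 0 < mu -> 0 <= K ->
    (forall z w, 0 <= Im z -> 0 <= Im w ->
       F z (Cconj w) <= K * Rpower (Im z + Im w + mu) q) ->
    path_dint s t F <= K * c * Rpower (t - s) (q + 2).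
Proof.
intros Hq.
exists (4 * Rpower (2 / 3) q * Rpower 3 (q + 2) / (- (q + 1) * (q + 2))).
intros s t mu K F Hst Hmu HK HF.
unfold path_dint.
eapply Rle_trans.
- apply (double_RInt_le_tent _ (K * Rpower (2 / 3) q) q mu); try lra.
  { apply Rmult_le_pos; [exact HK|left; apply Rpower_pos]. }
  intros u v Hu Hv.
  pose proof (Im_gam_ge s t u Hst Hu). pose proof (Im_gam_ge s t v Hst Hv).
  pose proof (tent_nonneg _ _ Hu). pose proof (tent_nonneg _ _ Hv).
  eapply Rle_trans; [apply HF; lra|].
  rewrite Rmult_assoc. apply Rmult_le_compat_l; [exact HK|].
  rewrite Rpower_mult_distr by lra.
  apply Rle_Rpower_l_neg; lra.
- rewrite <- (Rpower_mult_distr 3 (t - s)) by lra.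
  right. field. lra.
Qed.

Lemma kern_base_conj z w e :
  kern_base z (Cconj w) e = (Im z + Im w + e, Re w - Re z).
Proof.
destruct z as [x1 y1], w as [x2 y2].
unfold kern_base, Cconj, Cminus, Cplus, Cmult, Copp, Ci, RtoC, Re, Im; simpl.
f_equal; ring.
Qed.

(* Real and imaginary parts of (a + ib)^p for a > 0, in a form [auto_derive] handles. *)
Definition cpow_re (p a b : R) : R :=
  exp (p / 2 * ln (a ^ 2 + b ^ 2)) * cos (p * atan (b / a)).
Definition cpow_im (p a b : R) : R :=
  exp (p / 2 * ln (a ^ 2 + b ^ 2)) * sin (p * atan (b / a)).

Definition cpow_re_da (p a b : R) : R :=
  p * exp (p / 2 * ln (a ^ 2 + b ^ 2)) / (a ^ 2 + b ^ 2)
    * (a * cos (p * atan (b / a)) + b * sin (p * atan (b / a))).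
Definition cpow_im_da (p a b : R) : R :=
  p * exp (p / 2 * ln (a ^ 2 + b ^ 2)) / (a ^ 2 + b ^ 2)
    * (a * sin (p * atan (b / a)) - b * cos (p * atan (b / a))).

Lemma Rpower_sqrt x p : 0 < x -> Rpower (sqrt x) p = exp (p / 2 * ln x).
Proof.
intros Hx. unfold Rpower. f_equal.
rewrite <- (sqrt_sqrt x) at 2 by lra.
rewrite ln_mult by (apply sqrt_lt_R0; lra). field.
Qed.

Lemma cpow_polar p a b : 0 < a -> cpow (a, b) p = (cpow_re p a b, cpow_im p a b).
Proof.
intros Ha. assert (Hn : 0 < a ^ 2 + b ^ 2) by nra.
unfold cpow. destruct (Req_EM_T (Cmod (a, b)) 0) as [E|_].
- exfalso. unfold Cmod in E. simpl in E. apply sqrt_eq_0 in E; simpl in *; nra.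
- unfold Arg, cpow_re, cpow_im, Cmod; simpl.
  destruct (Rlt_dec 0 a); [|lra].
  rewrite Rpower_sqrt by (simpl in Hn; lra). reflexivity.
Qed.

Lemma is_derive_cpow_re p a b : 0 < a ->
  is_derive (fun a => cpow_re p a b) a (cpow_re_da p a b).
Proof.
intros Ha. unfold cpow_re, cpow_re_da. auto_derive.
- split; [nra|]. split; [lra|exact I].
- assert (0 < a ^ 2 + b ^ 2) by nra.
  set (E := exp _). set (Co := cos _). set (Si := sin _).
  field. split; [lra|nra].
Qed.

Lemma is_derive_cpow_im p a b : 0 < a ->
  is_derive (fun a => cpow_im p a b) a (cpow_im_da p a b).
Proof.
intros Ha. unfold cpow_im, cpow_im_da. auto_derive.
- split; [nra|]. split; [lra|exact I].
- assert (0 < a ^ 2 + b ^ 2) by nra.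
  set (E := exp _). set (Co := cos _). set (Si := sin _).
  field. split; [lra|nra].
Qed.

Lemma polar_deriv_bound p r A : 0 < r -> Rabs A <= 2 * r ->
  Rabs (p * Rpower r p / r ^ 2 * A) <= 2 * Rabs p * Rpower r (p - 1).
Proof.
intros Hr HA. pose proof (Rpower_pos r p). pose proof (Rabs_pos p).
assert (E : Rpower r (p - 1) = Rpower r p / r).
{ unfold Rminus. rewrite Rpower_plus, Rpower_Ropp, Rpower_1 by exact Hr. reflexivity. }
rewrite E, Rabs_mult. unfold Rdiv. rewrite !Rabs_mult.
rewrite (Rabs_pos_eq (Rpower r p)) by lra.
rewrite (Rabs_pos_eq (/ r ^ 2)) by (left; apply Rinv_0_lt_compat; nra).
replace (2 * Rabs p * (Rpower r p * / r))
  with (Rabs p * Rpower r p * / r ^ 2 * (2 * r)) by (field; lra).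
apply Rmult_le_compat_l; [|exact HA].
apply Rmult_le_pos; [nra|]. left; apply Rinv_0_lt_compat; nra.
Qed.

Lemma cpow_da_bound p a0 a b : p < 0 -> 0 < a0 <= a ->
  Rabs (cpow_re_da p a b) <= 2 * Rabs p * Rpower a0 (p - 1)
  /\ Rabs (cpow_im_da p a b) <= 2 * Rabs p * Rpower a0 (p - 1).
Proof.
intros Hp Ha.
assert (Hn : 0 < a ^ 2 + b ^ 2) by nra.
set (r := sqrt (a ^ 2 + b ^ 2)).
assert (Har : a <= r).
{ unfold r. apply Rle_trans with (sqrt (a ^ 2)).
  - rewrite sqrt_pow2; lra.
  - apply sqrt_le_1_alt; nra. }
assert (Hbr : Rabs b <= r).
{ unfold r. rewrite <- sqrt_Rsqr_abs. apply sqrt_le_1_alt. unfold Rsqr; nra. }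
assert (Hr2 : a ^ 2 + b ^ 2 = r ^ 2) by (unfold r; rewrite pow2_sqrt; lra).
assert (Hmono : Rpower r (p - 1) <= Rpower a0 (p - 1)) by (apply Rle_Rpower_l_neg; lra).
pose proof (Rabs_pos p).
set (th := p * atan (b / a)).
pose proof (COS_bound th). pose proof (SIN_bound th).
assert (Hcos : Rabs (cos th) <= 1) by (apply Rabs_le; lra).
assert (Hsin : Rabs (sin th) <= 1) by (apply Rabs_le; lra).
assert (Hab : forall u v, Rabs (a * u + b * v) <= 2 * r
                -> Rabs (p * exp (p / 2 * ln (a ^ 2 + b ^ 2)) / (a ^ 2 + b ^ 2) * (a * u + b * v))
                   <= 2 * Rabs p * Rpower a0 (p - 1)).
{ intros u v Huv. rewrite <- Rpower_sqrt by exact Hn. fold r. rewrite Hr2.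
  eapply Rle_trans; [apply polar_deriv_bound; [lra|exact Huv]|nra]. }
assert (Hcomb : forall u v, Rabs u <= 1 -> Rabs v <= 1 -> Rabs (a * u + b * v) <= 2 * r).
{ intros u v Hu Hv. eapply Rle_trans; [apply Rabs_triang|]. rewrite !Rabs_mult.
  rewrite (Rabs_pos_eq a) by lra. pose proof (Rabs_pos u). pose proof (Rabs_pos v).
  pose proof (Rabs_pos b). nra. }
split.
- apply Hab, Hcomb; assumption.
- unfold cpow_im_da. fold th. replace (a * sin th - b * cos th) with (a * sin th + b * - cos th)
    by ring.
  apply Hab, Hcomb; [|rewrite Rabs_Ropp]; assumption.
Qed.

Lemma Cmod_le_Rabs_add (u : C) : Cmod u <= Rabs (Re u) + Rabs (Im u).
Proof.
destruct u as [x y]. simpl.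
apply Rle_trans with (Cmod (RtoC x) + Cmod (Cmult Ci (RtoC y))).
- replace (x, y) with (Cplus (RtoC x) (Cmult Ci (RtoC y)))
    by (unfold Cplus, Cmult, Ci, RtoC; simpl; f_equal; ring).
  apply Cmod_triangle.
- rewrite Cmod_mult, Cmod_Ci, !Cmod_R. lra.
Qed.

Lemma cpow_lipschitz p a1 a2 b : p < 0 -> 0 < a1 <= a2 ->
  Cmod (Cminus (cpow (a1, b) p) (cpow (a2, b) p))
    <= 4 * Rabs p * Rpower a1 (p - 1) * (a2 - a1).
Proof.
intros Hp Ha.
rewrite !cpow_polar by lra.
eapply Rle_trans; [apply Cmod_le_Rabs_add|]. simpl.
fold (cpow_re p a1 b - cpow_re p a2 b) (cpow_im p a1 b - cpow_im p a2 b).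
(* Mean value inequality centred at [a2], so that every intermediate point is [>= a1]. *)
assert (Hmid : forall t, Rabs (t - a2) <= Rabs (a1 - a2) -> a1 <= t).
{ intros t Ht. rewrite (Rabs_minus_sym a1), (Rabs_pos_eq (a2 - a1)) in Ht by lra.
  pose proof (Rle_abs (- (t - a2))) as Hneg. rewrite Rabs_Ropp in Hneg. lra. }
assert (Hdist : Rabs (a1 - a2) = a2 - a1) by (rewrite Rabs_minus_sym; apply Rabs_pos_eq; lra).
set (D := 2 * Rabs p * Rpower a1 (p - 1)).
assert (Hre : Rabs (cpow_re p a1 b - cpow_re p a2 b) <= D * Rabs (a1 - a2)).
{ apply (bounded_variation (fun a => cpow_re p a b) (fun a => cpow_re_da p a b) D a2 a1).
  intros t Ht.
  pose proof (Hmid t Ht). split.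
  - apply is_derive_cpow_re; lra.
  - apply (cpow_da_bound p a1 t b); lra. }
assert (Him : Rabs (cpow_im p a1 b - cpow_im p a2 b) <= D * Rabs (a1 - a2)).
{ apply (bounded_variation (fun a => cpow_im p a b) (fun a => cpow_im_da p a b) D a2 a1).
  intros t Ht.
  pose proof (Hmid t Ht). split.
  - apply is_derive_cpow_im; lra.
  - apply (cpow_da_bound p a1 t b); lra. }
rewrite Hdist in Hre, Him. unfold D in *. lra.
Qed.

Lemma Cmod_cpow u p : Cmod u <> 0 -> Cmod (cpow u p) = Rpower (Cmod u) p.
Proof.
intros Hu. unfold cpow. destruct (Req_EM_T (Cmod u) 0) as [E|_]; [contradiction|].
unfold Cmod at 1; cbn [fst snd].
set (th := p * Arg u). set (P := Rpower (Cmod u) p).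
replace ((P * cos th) ^ 2 + (P * sin th) ^ 2) with (P ^ 2 * (sin th ^ 2 + cos th ^ 2)) by ring.
rewrite <- !Rsqr_pow2, sin2_cos2, Rmult_1_r.
apply sqrt_Rsqr. left; apply Rpower_pos.
Qed.

Lemma cpow_diff_size p a1 a2 b : p < 0 -> 0 < a1 <= a2 ->
  Cmod (Cminus (cpow (a1, b) p) (cpow (a2, b) p)) <= 2 * Rpower a1 p.
Proof.
intros Hp Ha.
assert (Hsize : forall a, a1 <= a -> Cmod (cpow (a, b) p) <= Rpower a1 p).
{ intros a Ha1. pose proof (re_le_Cmod (a, b)) as Hre. simpl in Hre.
  pose proof (Rle_abs a).
  rewrite Cmod_cpow by lra. apply Rle_Rpower_l_neg; lra. }
unfold Cminus. eapply Rle_trans; [apply Cmod_triangle|].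
rewrite Cmod_opp. pose proof (Hsize a1). pose proof (Hsize a2). lra.
Qed.

Lemma le_interpolate X c d Y p lam : 0 <= c -> 0 <= d -> 0 < Y -> 0 < lam < 1 ->
  X <= c * Rpower Y (p - 1) * d -> X <= c * Rpower Y p ->
  X <= c * rpow d lam * Rpower Y (p - lam).
Proof.
intros Hc Hd HY Hlam Hlip Hsize.
pose proof (Rpower_pos Y (p - lam)).
destruct Hd as [Hd|Hd].
2:{ subst d. unfold rpow. destruct Rle_dec; [|lra]. lra. }
rewrite rpow_Rpower by exact Hd. pose proof (Rpower_pos d lam).
destruct (Rle_or_lt d Y) as [HdY|HdY].
- assert (Hd1 : Rpower d (1 - lam) <= Rpower Y (1 - lam)) by (apply Rle_Rpower_l; lra).
  assert (Ed : d = Rpower d lam * Rpower d (1 - lam)).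
  { rewrite <- Rpower_plus. replace (lam + (1 - lam)) with 1 by ring.
    rewrite Rpower_1 by exact Hd. reflexivity. }
  rewrite Ed in Hlip.
  replace (Rpower Y (p - lam)) with (Rpower Y (p - 1) * Rpower Y (1 - lam))
    by (rewrite <- Rpower_plus; f_equal; ring).
  pose proof (Rpower_pos Y (p - 1)).
  eapply Rle_trans; [exact Hlip|].
  replace (c * Rpower Y (p - 1) * (Rpower d lam * Rpower d (1 - lam)))
    with (c * Rpower d lam * Rpower Y (p - 1) * Rpower d (1 - lam)) by ring.
  rewrite (Rmult_assoc _ (Rpower Y (p - 1))).
  apply Rmult_le_compat_l; [apply Rmult_le_pos; lra|].
  apply Rmult_le_compat_l; lra.
- assert (HYd : Rpower Y lam <= Rpower d lam) by (apply Rle_Rpower_l; lra).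
  replace (Rpower Y p) with (Rpower Y lam * Rpower Y (p - lam)) in Hsize
    by (rewrite <- Rpower_plus; f_equal; ring).
  eapply Rle_trans; [exact Hsize|]. rewrite <- Rmult_assoc.
  apply Rmult_le_compat_r; [lra|]. apply Rmult_le_compat_l; lra.
Qed.

Lemma cpow_shift_diff_le p lam D e1 e2 b : p < 0 -> 0 < lam < 1 -> 0 <= D ->
  0 < e1 -> 0 < e2 ->
  Cmod (Cminus (cpow (D + e1, b) p) (cpow (D + e2, b) p))
    <= (2 + 4 * Rabs p) * rpow (Rabs (e1 - e2)) lam * Rpower (D + Rmin e1 e2) (p - lam).
Proof.
intros Hp Hlam HD.
assert (Hord : forall e1 e2, 0 < e1 <= e2 ->
  Cmod (Cminus (cpow (D + e1, b) p) (cpow (D + e2, b) p))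
    <= (2 + 4 * Rabs p) * rpow (Rabs (e1 - e2)) lam * Rpower (D + Rmin e1 e2) (p - lam)).
{ intros x y Hxy. rewrite Rmin_left, Rabs_minus_sym, (Rabs_pos_eq (y - x)) by lra.
  pose proof (Rabs_pos p). pose proof (Rpower_pos (D + x) p).
  pose proof (Rpower_pos (D + x) (p - 1)).
  apply le_interpolate; try lra.
  - eapply Rle_trans; [apply cpow_lipschitz; lra|].
    replace (D + y - (D + x)) with (y - x) by ring.
    apply Rmult_le_compat_r; [lra|]. apply Rmult_le_compat_r; lra.
  - eapply Rle_trans; [apply cpow_diff_size; lra|].
    apply Rmult_le_compat_r; lra. }
intros H1 H2. destruct (Rle_or_lt e1 e2) as [H12|H21].
- apply Hord; lra.
- rewrite <- Cmod_opp, Rabs_minus_sym, Rmin_comm.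
  replace (Copp (Cminus (cpow (D + e1, b) p) (cpow (D + e2, b) p)))
    with (Cminus (cpow (D + e2, b) p) (cpow (D + e1, b) p))
    by (unfold Cminus, Copp, Cplus; simpl; f_equal; ring).
  apply Hord; lra.
Qed.

Theorem lemma6p1 (T alpha : R) (halpha : 0 < alpha < 1) :
  (exists c : R, forall s t eps : R, 0 <= s -> s < t -> t <= T -> 0 < eps ->
     path_dint s t (fun z w => Rpower (Cmod (kern_base z w eps)) (alpha - 2))
       <= c * rpow (Rabs (t - s)) alpha)
  /\
  (forall lam : R, 0 < lam < alpha ->
   exists c : R, forall s t eps eta : R, 0 <= s -> s < t -> t <= T ->
     0 < eps -> 0 < eta ->
     path_dint s t (fun z w =>
         Cmod (Cminus (cpow (kern_base z w eps) (alpha - 2))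
                      (cpow (kern_base z w eta) (alpha - 2))))
       <= c * rpow (Rabs (t - s)) (alpha - lam) * rpow (Rabs (eps - eta)) lam).
Proof.
split.
- destruct (path_dint_le (alpha - 2)) as [c Hc]; [lra|].
  exists c. intros s t eps _ Hst _ Heps.
  rewrite Rabs_pos_eq, rpow_Rpower by lra.
  replace (Rpower (t - s) alpha) with (Rpower (t - s) (alpha - 2 + 2)) by (f_equal; ring).
  rewrite <- (Rmult_1_l c).
  apply (Hc s t eps); [exact Hst|exact Heps|lra|].
  intros z w Hz Hw. rewrite Rmult_1_l, kern_base_conj.
  apply Rle_Rpower_l_neg; [lra|].
  pose proof (re_le_Cmod (Im z + Im w + eps, Re w - Re z)) as Hre.
  pose proof (Rle_abs (Im z + Im w + eps)). simpl in Hre. lra.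
- intros lam Hlam. set (p := alpha - 2).
  destruct (path_dint_le (p - lam)) as [c Hc]; [unfold p; lra|].
  exists ((2 + 4 * Rabs p) * c). intros s t eps eta _ Hst _ Heps Heta.
  rewrite (Rabs_pos_eq (t - s)), rpow_Rpower by lra.
  replace (alpha - lam) with (p - lam + 2) by (unfold p; ring).
  replace ((2 + 4 * Rabs p) * c * Rpower (t - s) (p - lam + 2) * rpow (Rabs (eps - eta)) lam)
    with ((2 + 4 * Rabs p) * rpow (Rabs (eps - eta)) lam * c * Rpower (t - s) (p - lam + 2))
    by ring.
  apply (Hc s t (Rmin eps eta)); [exact Hst|apply Rmin_glb_lt; assumption| |].
  + apply Rmult_le_pos; [pose proof (Rabs_pos p); lra|apply rpow_nonneg].
  + intros z w Hz Hw. rewrite !kern_base_conj.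
    apply cpow_shift_diff_le; unfold p; lra.
Qed.
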